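(* Let $R$ be a ring with identity and involution $*$, and let $a,b\in R$ be core invertible with core inverses $a^{\oplus}$ and $b^{\oplus}$. If $ab=0=ba$ and $a^*b=0$, then $a+b$ is core invertible and $(a+b)^{\oplus}=a^{\oplus}+b^{\oplus}$.
   Context: An involution on $R$ satisfies $(a^* )^*=a$, $(ab)^*=b^*a^*$, $(a+b)^*=a^*+b^*$. An element $x\in R$ is a core inverse of $a$ if $axa=a$, $xR=aR$ and $Rx=Ra^*$; it is unique when it exists and is denoted $a^{\oplus}$. *)

From mathcomp Require Import all_boot all_algebra.
Set Implicit Arguments. Unset Strict Implicit. Unset Printing Implicit Defensive.
Import GRing.Theory.
Local Open Scope ring_scope.

Definition involution (R : pzRingType) (star : R -> R) : Prop :=
  (forall a, star (star a) = a) /\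
  (forall a b, star (a * b) = star b * star a) /\
  (forall a b, star (a + b) = star a + star b).

Definition rideal (R : pzRingType) (x : R) : R -> Prop := fun y => exists r, y = x * r.
Definition lideal (R : pzRingType) (x : R) : R -> Prop := fun y => exists r, y = r * x.

Definition is_core_inverse (R : pzRingType) (star : R -> R) (a x : R) : Prop :=
  a * x * a = a /\
  (forall y, rideal x y <-> rideal a y) /\
  (forall y, lideal x y <-> lideal (star a) y).

Definition core_invertible (R : pzRingType) (star : R -> R) (a : R) : Prop :=
  exists x, is_core_inverse star a x.

From mathcomp Require Import all_boot all_algebra.
Local Open Scope ring_scope.
Import GRing.Theory.
Set Implicit Arguments. Unset Strict Implicit.

(* A core inverse x of a is pinned down, as far as ideals go, by four
   factorizations: x = a (x x), a = x (a a), x = (x x^* ) a^* and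
   a^* = (a^* a) x.  Under the four orthogonality relations
   a y = b x = x b = y a = 0 the same factorizations for a and b add up to
   ones for a + b and x + y, with witnesses the sums of the witnesses.  The
   hypotheses a b = b a = a^* b = 0 give those relations, since y lies in
   b R and R b^*, and x lies in a R and R a^*. *)

Lemma rideal_equiv (R : pzRingType) (x a r s : R) :
  x = a * r -> a = x * s -> forall y, rideal x y <-> rideal a y.
Proof.
move=> xa ax y; split=> [[t ->]|[t ->]].
- by exists (r * t); rewrite xa mulrA.
- by exists (s * t); rewrite ax mulrA.
Qed.

Lemma lideal_equiv (R : pzRingType) (x a r s : R) :
  x = r * a -> a = s * x -> forall y, lideal x y <-> lideal a y.
Proof.
move=> xa ax y; split=> [[t ->]|[t ->]].
- by exists (t * r); rewrite xa mulrA.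
- by exists (t * s); rewrite ax mulrA.
Qed.

Lemma is_core_inverse_intro (R : pzRingType) (star : R -> R) (a x r s u v : R) :
  a * x * a = a -> x = a * r -> a = x * s ->
  x = u * star a -> star a = v * x -> is_core_inverse star a x.
Proof.
move=> axa xa ax xsa sax; split=> //; split.
- exact: rideal_equiv xa ax.
- exact: lideal_equiv xsa sax.
Qed.

Lemma mulDD_orth (R : pzRingType) (p q r s : R) :
  p * s = 0 -> q * r = 0 -> (p + q) * (r + s) = p * r + q * s.
Proof. by move=> ps qr; rewrite mulrDl !mulrDr ps qr addr0 add0r. Qed.

Section CoreInverse.

Variables (R : pzRingType) (star : R -> R).

Lemma mul_core_inverse_eq0 (b y c : R) :
  is_core_inverse star b y -> c * b = 0 -> c * y = 0.
Proof.
move=> [_ [hr _]] cb; have [r ->] : rideal b y by apply/hr; exists 1; rewrite mulr1.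
by rewrite mulrA cb mul0r.
Qed.

Lemma core_inverse_mul_eq0 (a x c : R) :
  is_core_inverse star a x -> star a * c = 0 -> x * c = 0.
Proof.
move=> [_ [_ hl]] ac; have [u ->] : lideal (star a) x by apply/hl; exists 1; rewrite mul1r.
by rewrite -mulrA ac mulr0.
Qed.

Hypothesis inv : involution star.

Let starK : forall a, star (star a) = a. Proof. by case: inv. Qed.
Let starM : forall a b, star (a * b) = star b * star a. Proof. by case: inv => _ []. Qed.
Let starD : forall a b, star (a + b) = star a + star b. Proof. by case: inv => _ []. Qed.

Lemma star0 : star 0 = 0.
Proof. by apply: (addrI (star 0)); rewrite -starD !addr0. Qed.

Lemma star_mul_eq0 (a b : R) : star a * b = 0 -> star b * a = 0.
Proof. by move=> ab; rewrite -[a]starK -starM ab star0. Qed.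

Section Factorizations.

Variables (a x : R).
Hypothesis hx : is_core_inverse star a x.

Let axa : a * x * a = a. Proof. by case: hx. Qed.
Let x_ra : exists r, x = a * r.
Proof. by case: hx => _ [hr _]; apply/hr; exists 1; rewrite mulr1. Qed.
Let a_rx : exists s, a = x * s.
Proof. by case: hx => _ [hr _]; apply/hr; exists 1; rewrite mulr1. Qed.
Let x_la : exists u, x = u * star a.
Proof. by case: hx => _ [_ hl]; apply/hl; exists 1; rewrite mul1r. Qed.
Let a_lx : exists v, star a = v * x.
Proof. by case: hx => _ [_ hl]; apply/hl; exists 1; rewrite mul1r. Qed.

Lemma core_inverse_rfactor : a * (x * x) = x.
Proof. by have [r {2 3}->] := x_ra; rewrite !mulrA axa. Qed.

Lemma core_inverse_star_lfactor : x = x * star x * star a.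
Proof.
have sa : star a = star a * star x * star a by rewrite -{1}axa !starM mulrA.
by have [u {1 2}->] := x_la; rewrite {1}sa !mulrA.
Qed.

Lemma core_inverse_herm : star (a * x) = a * x.
Proof.
have e : a * x = a * x * star (a * x).
  by rewrite {1}core_inverse_star_lfactor starM !mulrA.
by rewrite e starM starK.
Qed.

Lemma core_inverse_xax : x * a * x = x.
Proof. by rewrite -mulrA -core_inverse_herm starM mulrA -core_inverse_star_lfactor. Qed.

Lemma core_inverse_lfactor : x * (a * a) = a.
Proof. by have [s {2 3}->] := a_rx; rewrite !mulrA core_inverse_xax. Qed.

Lemma core_inverse_star_rfactor : star a = star a * a * x.
Proof. by have [v {1 2}->] := a_lx; rewrite -{1}core_inverse_xax !mulrA. Qed.

End Factorizations.

Lemma core_inverse_add (a b x y : R) :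
  is_core_inverse star a x -> is_core_inverse star b y ->
  a * y = 0 -> b * x = 0 -> x * b = 0 -> y * a = 0 ->
  is_core_inverse star (a + b) (x + y).
Proof.
move=> ha hb ay bx xb ya.
apply: (@is_core_inverse_intro _ _ _ _ (x * x + y * y) (a * a + b * b)
          (x * star x + y * star y) (star a * a + star b * b)).
- rewrite mulDD_orth // mulDD_orth; first by rewrite (proj1 ha) (proj1 hb).
  + by rewrite -mulrA xb mulr0.
  + by rewrite -mulrA ya mulr0.
- rewrite mulDD_orth; first by rewrite (core_inverse_rfactor ha) (core_inverse_rfactor hb).
  + by rewrite mulrA ay mul0r.
  + by rewrite mulrA bx mul0r.
- rewrite mulDD_orth; first by rewrite (core_inverse_lfactor ha) (core_inverse_lfactor hb).
  + by rewrite mulrA xb mul0r.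
  + by rewrite mulrA ya mul0r.
- rewrite starD mulDD_orth -?(core_inverse_star_lfactor ha) -?(core_inverse_star_lfactor hb) //.
  + by rewrite -mulrA -starM bx star0 mulr0.
  + by rewrite -mulrA -starM ay star0 mulr0.
- rewrite starD mulDD_orth -?(core_inverse_star_rfactor ha) -?(core_inverse_star_rfactor hb) //.
  + by rewrite -mulrA ay mulr0.
  + by rewrite -mulrA bx mulr0.
Qed.

End CoreInverse.

Theorem corollary4p7 (R : pzRingType) (star : R -> R) (a b ca cb : R) :
  involution star ->
  is_core_inverse star a ca -> is_core_inverse star b cb ->
  a * b = 0 -> b * a = 0 -> star a * b = 0 ->
  core_invertible star (a + b) /\ is_core_inverse star (a + b) (ca + cb).
Proof.
move=> inv ha hb ab ba sab.
have sum : is_core_inverse star (a + b) (ca + cb).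
  apply: (core_inverse_add inv ha hb).
  - exact: mul_core_inverse_eq0 hb ab.
  - exact: mul_core_inverse_eq0 ha ba.
  - exact: core_inverse_mul_eq0 ha sab.
  - exact: core_inverse_mul_eq0 hb (star_mul_eq0 inv sab).
by split=> //; exists (ca + cb).
Qed.
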